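(* Let $\mathcal{X}$ and $\mathcal{B}$ be categories with finite limits, and let $L : \mathcal{X}\to\mathcal{B}$ be a functor with a fully faithful right adjoint $R$. Then $L$ is a Street fibration if and only if the adjunction $L\dashv R$ is semi-left-exact.
   Context: Let $\sigma$ be the unit of $L\dashv R$. The adjunction is semi-left-exact if for every pullback square in $\mathcal{X}$ with vertex $Y$ of a cospan $X \xrightarrow{\sigma_X} R(LX) \xleftarrow{g} RB$ (with $X\in\mathcal{X}$, $B\in\mathcal{B}$), the projection $u : Y \to RB$ is sent by $L$ to an isomorphism $Lu$. A Street fibration is a functor isomorphic to the composite of an equivalence followed by a Grothendieck fibration (equivalently, a functor admitting cartesian lifts in the up-to-isomorphism sense). *)

Set Implicit Arguments.
Unset Strict Implicit.

Record Category := {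
  ob :> Type;
  hom : ob -> ob -> Type;
  idm : forall a, hom a a;
  comp : forall a b c, hom b c -> hom a b -> hom a c;
  comp_id_l : forall a b (f : hom a b), comp (idm b) f = f;
  comp_id_r : forall a b (f : hom a b), comp f (idm a) = f;
  comp_assoc : forall a b c d (f : hom a b) (g : hom b c) (h : hom c d),
      comp h (comp g f) = comp (comp h g) f
}.
Arguments hom {C} : rename.
Arguments idm {C} a : rename.
Arguments comp {C a b c} : rename.
Notation "g \o f" := (comp g f) (at level 40, left associativity).

Record Functor (C D : Category) := {
  fobj :> C -> D;
  fmap : forall a b, @hom C a b -> @hom D (fobj a) (fobj b);
  fmap_id : forall a, fmap (idm a) = idm (fobj a);
  fmap_comp : forall a b c (f : @hom C a b) (g : @hom C b c),
      fmap (g \o f) = fmap g \o fmap f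
}.
Arguments fmap {C D} F {a b} : rename.

Definition is_iso (C : Category) (a b : C) (f : hom a b) : Prop :=
  exists g : hom b a, g \o f = idm a /\ f \o g = idm b.

Definition is_terminal (C : Category) (t : C) : Prop :=
  forall x : C, exists! f : hom x t, True.

Definition is_pullback (C : Category) (P A B Z : C)
    (p1 : hom P A) (p2 : hom P B) (f : hom A Z) (g : hom B Z) : Prop :=
  f \o p1 = g \o p2 /\
  forall (Q : C) (q1 : hom Q A) (q2 : hom Q B), f \o q1 = g \o q2 ->
    exists! m : hom Q P, p1 \o m = q1 /\ p2 \o m = q2.

Definition has_finite_limits (C : Category) : Prop :=
  (exists t : C, is_terminal t) /\
  forall (A B Z : C) (f : hom A Z) (g : hom B Z),
    exists (P : C) (p1 : hom P A) (p2 : hom P B), is_pullback p1 p2 f g.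

Definition fully_faithful (C D : Category) (F : Functor C D) : Prop :=
  forall a b : C,
    (forall f g : hom a b, fmap F f = fmap F g -> f = g) /\
    (forall h : hom (F a) (F b), exists f : hom a b, fmap F f = h).

Definition is_adjunction (X B : Category) (L : Functor X B) (R : Functor B X)
    (sigma : forall x : X, hom x (R (L x)))
    (eps : forall b : B, hom (L (R b)) b) : Prop :=
  (forall (x y : X) (f : hom x y), sigma y \o f = fmap R (fmap L f) \o sigma x) /\
  (forall (a b : B) (f : hom a b), eps b \o fmap L (fmap R f) = f \o eps a) /\
  (forall x : X, eps (L x) \o fmap L (sigma x) = idm (L x)) /\
  (forall b : B, fmap R (eps b) \o sigma (R b) = idm (R b)).

Definition semi_left_exact (X B : Category) (L : Functor X B) (R : Functor B X)
    (sigma : forall x : X, hom x (R (L x))) : Prop :=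
  forall (x : X) (b : B) (g : hom (R b) (R (L x)))
         (y : X) (v : hom y x) (u : hom y (R b)),
    is_pullback v u (sigma x) g -> is_iso (fmap L u).

Definition is_cartesian (E B : Category) (P : Functor E B) (e' e : E)
    (g : hom e' e) : Prop :=
  forall (e'' : E) (h : hom e'' e) (k : hom (P e'') (P e')),
    fmap P g \o k = fmap P h ->
    exists! m : hom e'' e', g \o m = h /\ fmap P m = k.

Definition street_fibration (E B : Category) (P : Functor E B) : Prop :=
  forall (e : E) (b : B) (f : hom b (P e)),
    exists (e' : E) (g : hom e' e) (phi : hom b (P e')),
      is_cartesian P g /\ is_iso phi /\ fmap P g \o phi = f.
Arguments is_adjunction {X B} L R sigma eps.
Arguments semi_left_exact {X B} L R sigma.
Arguments street_fibration {E B} P.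
Arguments fully_faithful {C D} F.


(* (=>) The pullback of the unit along [R g] is compared with a cartesian lift of
   [g]: the cartesian property and the pullback property give mutually inverse
   maps, which identify [L u] with the (invertible) comparison of the lift with
   [b], up to the counit [L R b ~ b].
   (<=) Conversely, with [R] fully faithful every map [f : b -> L e] is [L R f]
   up to the counit, and the pullback of the unit [sigma e] along [R f] is a
   cartesian lift of [f] as soon as [L] inverts its second leg. *)

Definition has_pullbacks (C : Category) : Prop :=
  forall (A B Z : C) (f : hom A Z) (g : hom B Z),
    exists (P : C) (p1 : hom P A) (p2 : hom P B), is_pullback p1 p2 f g.

Lemma has_finite_limits_pullbacks {C : Category} :
  has_finite_limits C -> has_pullbacks C.
Proof. intros [_ pb]; exact pb. Qed.

Section Elementary.
Context {C : Category}.

Lemma is_iso_comp {a b c : C} {f : hom a b} {g : hom b c} :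
  is_iso f -> is_iso g -> is_iso (g \o f).
Proof.
  intros [f' [Hf1 Hf2]] [g' [Hg1 Hg2]].
  exists (f' \o g'). split.
  - rewrite comp_assoc, <- (comp_assoc g g' f'), Hg1, comp_id_r, Hf1. reflexivity.
  - rewrite comp_assoc, <- (comp_assoc f' f g), Hf2, comp_id_r, Hg2. reflexivity.
Qed.

Lemma is_iso_cancel_l {a b c : C} {f : hom a b} {g : hom b c} :
  is_iso g -> is_iso (g \o f) -> is_iso f.
Proof.
  intros [g' [Hg1 Hg2]] Hgf.
  replace f with ((g' \o g) \o f) by (rewrite Hg1; apply comp_id_l).
  rewrite <- comp_assoc. apply is_iso_comp; [exact Hgf |].
  exists g. split; assumption.
Qed.

Lemma iso_monic {a b c : C} {f : hom b c} {x y : hom a b} :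
  is_iso f -> f \o x = f \o y -> x = y.
Proof.
  intros [f' [Hf _]] Hxy.
  rewrite <- (comp_id_l x), <- (comp_id_l y), <- Hf, <- !comp_assoc, Hxy.
  reflexivity.
Qed.

Lemma pullback_jointly_monic {P A B Z Q : C} {p1 : hom P A} {p2 : hom P B}
    {f : hom A Z} {g : hom B Z} {m m' : hom Q P} :
  is_pullback p1 p2 f g -> p1 \o m = p1 \o m' -> p2 \o m = p2 \o m' -> m = m'.
Proof.
  intros [Hsq Huniv] H1 H2.
  assert (Hq : f \o (p1 \o m') = g \o (p2 \o m')).
  { rewrite !comp_assoc, Hsq. reflexivity. }
  destruct (Huniv Q _ _ Hq) as [n [_ Hn]].
  transitivity n; [symmetry |]; apply Hn; split; auto.
Qed.

End Elementary.

Section Adjunction.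
Context {X B : Category} {L : Functor X B} {R : Functor B X}
  {sigma : forall x : X, hom x (R (L x))} {eps : forall b : B, hom (L (R b)) b}.
Hypothesis adj : is_adjunction L R sigma eps.

Lemma unit_natural (x y : X) (f : hom x y) :
  sigma y \o f = fmap R (fmap L f) \o sigma x.
Proof. apply adj. Qed.

Lemma counit_natural (a b : B) (f : hom a b) :
  eps b \o fmap L (fmap R f) = f \o eps a.
Proof. apply adj. Qed.

Lemma triangle_L (x : X) : eps (L x) \o fmap L (sigma x) = idm (L x).
Proof. apply adj. Qed.

Lemma triangle_R (b : B) : fmap R (eps b) \o sigma (R b) = idm (R b).
Proof. apply adj. Qed.

Lemma unit_transpose (a : X) (b : B) (w : hom a (R b)) :
  fmap R (eps b \o fmap L w) \o sigma a = w.
Proof.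
  rewrite fmap_comp, <- comp_assoc, <- unit_natural, comp_assoc, triangle_R.
  apply comp_id_l.
Qed.

Lemma counit_transpose (a : X) (c : B) (w : hom (L a) c) :
  eps c \o fmap L (fmap R w \o sigma a) = w.
Proof.
  rewrite fmap_comp, comp_assoc, counit_natural, <- comp_assoc, triangle_L.
  apply comp_id_r.
Qed.

Lemma fmap_L_unit_square {x y : X} {b : B} {v : hom y x} {u : hom y (R b)}
    {g : hom b (L x)} :
  sigma x \o v = fmap R g \o u -> fmap L v = g \o (eps b \o fmap L u).
Proof.
  intros Hsq.
  rewrite <- (comp_id_l (fmap L v)), <- triangle_L, <- comp_assoc, <- fmap_comp.
  rewrite Hsq, fmap_comp, comp_assoc, counit_natural, comp_assoc.
  reflexivity.
Qed.

Hypothesis R_ff : fully_faithful R.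

Lemma counit_is_iso (b : B) : is_iso (eps b).
Proof.
  destruct (R_ff b (L (R b))) as [_ Hfull].
  destruct (Hfull (sigma (R b))) as [d Hd].
  destruct (R_ff b b) as [Hfaith _].
  exists d. split.
  - rewrite <- (counit_transpose _ _ (d \o eps b)), <- (counit_transpose _ _ (idm _)).
    do 2 f_equal.
    rewrite fmap_comp, Hd, <- comp_assoc, triangle_R, comp_id_r, fmap_id, comp_id_l.
    reflexivity.
  - apply Hfaith. rewrite fmap_comp, Hd, triangle_R, fmap_id. reflexivity.
Qed.

Lemma street_fibration_semi_left_exact :
  street_fibration L -> semi_left_exact L R sigma.
Proof.
  intros Hfib x b g y v u Hpb.
  destruct (proj2 (R_ff b (L x)) g) as [g' <-].
  destruct (Hfib x b g') as [e [c [phi [Hcart [[phi' [Hphi1 Hphi2]] Hlift]]]]].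
  assert (Hsq_c : sigma x \o c = fmap R g' \o (fmap R phi' \o sigma e)).
  { rewrite unit_natural, <- Hlift, comp_assoc, <- fmap_comp, <- comp_assoc,
      Hphi2, comp_id_r.
    reflexivity. }
  destruct (proj2 Hpb e c _ Hsq_c) as [t [[Hvt Hut] _]].
  set (h := phi \o (eps b \o fmap L u)).
  assert (Hch : fmap L c \o h = fmap L v).
  { unfold h. rewrite comp_assoc, Hlift.
    symmetry. apply fmap_L_unit_square, Hpb. }
  destruct (Hcart y v h Hch) as [s [[Hcs Hs] _]].
  assert (Hts : t \o s = idm y).
  { apply (pullback_jointly_monic Hpb).
    - rewrite comp_assoc, Hvt, Hcs, comp_id_r. reflexivity.
    - rewrite comp_assoc, Hut, <- comp_assoc, unit_natural, comp_assoc,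
        <- fmap_comp, Hs.
      unfold h. rewrite comp_assoc, Hphi1, comp_id_l, unit_transpose, comp_id_r.
      reflexivity. }
  assert (Hh : is_iso h).
  { exists (fmap L t). split.
    - rewrite <- Hs, <- fmap_comp, Hts. apply fmap_id.
    - unfold h. rewrite <- !comp_assoc, <- fmap_comp, Hut, counit_transpose.
      exact Hphi2. }
  apply (is_iso_cancel_l (g := phi \o eps b)).
  - apply is_iso_comp; [apply counit_is_iso | exists phi'; split; assumption].
  - unfold h in Hh. rewrite <- comp_assoc. exact Hh.
Qed.

Lemma unit_pullback_cartesian {e P : X} {b : B} {f : hom b (L e)}
    {p1 : hom P e} {p2 : hom P (R b)} :
  is_pullback p1 p2 (sigma e) (fmap R f) -> is_iso (eps b \o fmap L p2) ->
  is_cartesian L p1.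
Proof.
  intros Hpb Hc e' h k Hk.
  set (c := eps b \o fmap L p2) in Hc.
  assert (Hp1 : fmap L p1 = f \o c) by exact (fmap_L_unit_square (proj1 Hpb)).
  assert (Hsq : sigma e \o h = fmap R f \o (fmap R (c \o k) \o sigma e')).
  { rewrite unit_natural, <- Hk, Hp1, !fmap_comp, !comp_assoc. reflexivity. }
  destruct (proj2 Hpb e' h _ Hsq) as [m [[Hm1 Hm2] Hm]].
  exists m. split; [split |].
  - exact Hm1.
  - apply (iso_monic Hc). unfold c.
    rewrite <- comp_assoc, <- fmap_comp, Hm2, counit_transpose. reflexivity.
  - intros m' [Hm'1 Hm'2]. apply Hm. split; [exact Hm'1 |].
    rewrite <- Hm'2, <- (unit_transpose _ _ (p2 \o m')).
    unfold c. rewrite <- comp_assoc, <- fmap_comp. reflexivity.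
Qed.

Lemma semi_left_exact_street_fibration :
  has_pullbacks X -> semi_left_exact L R sigma -> street_fibration L.
Proof.
  intros pbX Hsle e b f.
  destruct (pbX _ _ _ (sigma e) (fmap R f)) as [P [p1 [p2 Hpb]]].
  assert (Hc : is_iso (eps b \o fmap L p2)).
  { apply is_iso_comp; [exact (Hsle e b _ P p1 p2 Hpb) | apply counit_is_iso]. }
  destruct Hc as [phi [Hc1 Hc2]].
  exists P, p1, phi. split; [| split].
  - apply (unit_pullback_cartesian Hpb). exists phi. split; assumption.
  - exists (eps b \o fmap L p2). split; assumption.
  - rewrite (fmap_L_unit_square (proj1 Hpb)), <- comp_assoc, Hc2.
    apply comp_id_r.
Qed.

End Adjunction.

Theorem lemma5p2 (X B : Category) (L : Functor X B) (R : Functor B X)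
    (sigma : forall x : X, hom x (R (L x)))
    (eps : forall b : B, hom (L (R b)) b) :
  has_finite_limits X -> has_finite_limits B ->
  is_adjunction L R sigma eps -> fully_faithful R ->
  (street_fibration L <-> semi_left_exact L R sigma).
Proof.
  intros limX _ adj R_ff. split.
  - exact (street_fibration_semi_left_exact adj R_ff).
  - exact (semi_left_exact_street_fibration adj R_ff
             (has_finite_limits_pullbacks limX)).
Qed.
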